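(* Let $s\ge1$ and $n\ge1$ be integers, $\Sigma=\{-s,\dots,-1,0,1,\dots,s\}$ and $\Sigma_*=\Sigma\setminus\{0\}$. Every string ${\bf t}\in\Sigma^n$ is equivalent to one and only one string of the form $x_1x_2\cdots x_k\underbrace{0\cdots0}_{n-k}$ with $0\le k\le n$, $x_i\in\Sigma_*$ for all $i$, and such that there is no index $i$ with $x_i=m\in\{1,\dots,s\}$ and $x_{i+1}=-m$.
   Context: The local moves on strings in $\Sigma^n$ are: replace an adjacent pair $(0,m)$ by $(m,0)$ or vice versa, for any $m\in\Sigma_*$; and replace an adjacent pair $(0,0)$ by $(m,-m)$ or vice versa, for any $m\in\{1,\dots,s\}$. Two strings are equivalent if one can be obtained from the other by a finite sequence of local moves. *)

From mathcomp Require Import all_boot all_order all_algebra.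
From Stdlib Require Import Relations.
Set Implicit Arguments. Unset Strict Implicit. Unset Printing Implicit Defensive.
Import Order.TTheory GRing.Theory Num.Theory.
Local Open Scope ring_scope.

Definition in_Sigma (s : nat) (x : int) : bool := (- (s%:Z) <= x) && (x <= s%:Z).
Definition in_Sigma_star (s : nat) (x : int) : bool := in_Sigma s x && (x != 0).
Definition in_pos (s : nat) (m : int) : bool := (0 < m) && (m <= s%:Z).

Definition is_string (s n : nat) (t : seq int) : Prop :=
  size t = n /\ all (in_Sigma s) t.

Definition pair_move (s : nat) (x y x' y' : int) : Prop :=
  (exists m, in_Sigma_star s m /\ x = 0 /\ y = m /\ x' = m /\ y' = 0) \/
  (exists m, in_Sigma_star s m /\ x = m /\ y = 0 /\ x' = 0 /\ y' = m) \/
  (exists m, in_pos s m /\ x = 0 /\ y = 0 /\ x' = m /\ y' = - m) \/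
  (exists m, in_pos s m /\ x = m /\ y = - m /\ x' = 0 /\ y' = 0).

Definition local_move (s : nat) (u v : seq int) : Prop :=
  exists (a b : seq int) (x y x' y' : int),
    u = a ++ [:: x; y] ++ b /\ v = a ++ [:: x'; y'] ++ b /\ pair_move s x y x' y'.

Definition equiv_str (s : nat) : relation (seq int) :=
  clos_refl_trans (seq int) (local_move s).

Definition normal_form (s n : nat) (u : seq int) : Prop :=
  exists (k : nat) (xs : seq int),
    (k <= n)%N /\ size xs = k /\ u = xs ++ nseq (n - k)%N (0 : int) /\
    all (in_Sigma_star s) xs /\
    (forall i : nat, (i.+1 < k)%N ->
        ~ (in_pos s (nth 0 xs i) /\ nth 0 xs i.+1 = - nth 0 xs i)).

From mathcomp Require Import all_boot all_order all_algebra.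
From Stdlib Require Import Relations.
Set Implicit Arguments. Unset Strict Implicit. Unset Printing Implicit Defensive.
Import Order.TTheory GRing.Theory Num.Theory.
Local Open Scope ring_scope.

(* Read a string from right to left, keeping a stack: zeros are dropped, and a
   letter m > 0 arriving on top of -m cancels it.  Every local move leaves the
   resulting reduct (and the length) unchanged, since pushing the pair (0,m),
   (m,0), (0,0) or (m,-m) onto any stack gives the same result as pushing the
   pair it is exchanged with.  Conversely a string can be moved to its reduct
   followed by zeros: zeros travel to the right through nonzero letters, and a
   pair (m,-m) becomes (0,0).  Normal forms are exactly the reduced words
   padded with zeros, so they are determined by the reduct and the length. *)

Definition cancels (x y : int) : bool := (0 < x) && (y == - x).

Definition reduced (r : seq int) : bool :=
  all (fun x => x != 0) r && sorted (fun x y => ~~ cancels x y) r.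

Definition reduce_cons (x : int) (r : seq int) : seq int :=
  if x == 0 then r else
  if r is y :: r' then (if cancels x y then r' else x :: r) else [:: x].

Definition reduce (t : seq int) : seq int := foldr reduce_cons [::] t.

Lemma reduce_cat a b : reduce (a ++ b) = foldr reduce_cons (reduce b) a.
Proof. by rewrite /reduce foldr_cat. Qed.

Lemma reduce_nseq0 j : reduce (nseq j 0) = [::].
Proof. by elim: j => //= j ->; rewrite /reduce_cons eqxx. Qed.

Lemma reduce_cons_opp m r : 0 < m -> reduce_cons m (reduce_cons (- m) r) = r.
Proof.
move=> m_gt0; have Nm_le0 : (0 < - m) = false by rewrite oppr_gt0 ltNge ltW.
rewrite /reduce_cons oppr_eq0 gt_eqF //.
by case: r => [|y r]; rewrite /= /cancels ?Nm_le0 /= m_gt0 eqxx.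
Qed.

Lemma reduce_cons_pair_move s x y x' y' r : pair_move s x y x' y' ->
  reduce_cons x (reduce_cons y r) = reduce_cons x' (reduce_cons y' r).
Proof.
have reduce_cons0 r' : reduce_cons 0 r' = r' by rewrite /reduce_cons eqxx.
case=> [[m [_ [-> [-> [-> ->]]]]]|[[m [_ [-> [-> [-> ->]]]]]|[]]].
- by rewrite !reduce_cons0.
- by rewrite !reduce_cons0.
- move=> [m [/andP[m_gt0 _] [-> [-> [-> ->]]]]].
  by rewrite !reduce_cons0 reduce_cons_opp.
- move=> [m [/andP[m_gt0 _] [-> [-> [-> ->]]]]].
  by rewrite !reduce_cons0 reduce_cons_opp.
Qed.

Lemma equiv_str_inv s (T : Type) (f : seq int -> T) u v :
  (forall u' v', local_move s u' v' -> f u' = f v') ->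
  equiv_str s u v -> f u = f v.
Proof.
move=> f_move; elim=> [u' v' /f_move //|//|u1 u2 u3 _ -> _ ->] //.
Qed.

Lemma equiv_str_reduce s u v : equiv_str s u v -> reduce u = reduce v.
Proof.
apply: equiv_str_inv => _ _ [a [b [x [y [x' [y' [-> [-> xy_move]]]]]]]].
by rewrite !reduce_cat /= (reduce_cons_pair_move _ xy_move).
Qed.

Lemma equiv_str_size s u v : equiv_str s u v -> size u = size v.
Proof.
apply: equiv_str_inv => _ _ [a [b [x [y [x' [y' [-> [-> _]]]]]]]].
by rewrite !size_cat.
Qed.

Lemma equiv_str_cons s y u v :
  equiv_str s u v -> equiv_str s (y :: u) (y :: v).
Proof.
elim=> [u' v' [a [b [x [x1 [x' [x1' [-> [-> xx1_move]]]]]]]]|u'|u1 u2 u3 _ h12 _ h23].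
- by apply: rt_step; exists (y :: a), b, x, x1, x', x1'.
- exact: rt_refl.
- exact: rt_trans h12 h23.
Qed.

Lemma equiv_str_zero_shift s r w : all (in_Sigma_star s) r ->
  equiv_str s (0 :: r ++ w) (r ++ 0 :: w).
Proof.
elim: r => [|y r IHr] /=; first by move=> _; apply: rt_refl.
move=> /andP[y_star r_star]; apply: rt_trans (equiv_str_cons y (IHr r_star)).
apply: rt_step; exists [::], (r ++ w), 0, y, y, 0.
by do 2 split => //; left; exists y.
Qed.

Lemma equiv_str_cancel_shift s m r w : in_pos s m -> all (in_Sigma_star s) r ->
  equiv_str s (m :: - m :: r ++ w) (r ++ [:: 0, 0 & w]).
Proof.
move=> m_pos r_star; apply: (@rt_trans _ _ _ (0 :: 0 :: r ++ w)).
  apply: rt_step; exists [::], (r ++ w), m, (- m), 0, 0.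
  by do 2 split => //; right; right; right; exists m.
apply: rt_trans (equiv_str_cons 0 (equiv_str_zero_shift w r_star)) _.
exact: (equiv_str_zero_shift (0 :: w) r_star).
Qed.

Lemma reduce_Sigma_star s t :
  all (in_Sigma s) t -> all (in_Sigma_star s) (reduce t).
Proof.
elim: t => [|x t IHt] //= /andP[x_Sigma /IHt]; rewrite /reduce_cons.
have [//|x_neq0] := eqVneq x 0.
have x_star : in_Sigma_star s x by rewrite /in_Sigma_star x_Sigma x_neq0.
case: (reduce t) => [|y r] /=; first by rewrite x_star.
by case: ifP => _ /= => [/andP[]|->]; rewrite ?x_star.
Qed.

Lemma reduce_reduced t : reduced (reduce t).
Proof.
elim: t => [|x t] //=; rewrite /reduced /reduce_cons.
have [//|x_neq0] := eqVneq x 0.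
case: (reduce t) => [|y r] /=; first by rewrite x_neq0.
case: ifP => [_|xy_ok] /= /andP[/andP[y_neq0 ->] r_path].
  by case: r r_path => //= z r /andP[].
by rewrite x_neq0 y_neq0 xy_ok r_path.
Qed.

Lemma reduce_id r : reduced r -> reduce r = r.
Proof.
elim: r => [|x r IHr] //= /andP[/andP[x_neq0 r_neq0] r_sorted].
rewrite IHr; last by apply/andP; split; last exact: path_sorted r_sorted.
rewrite /reduce_cons (negbTE x_neq0).
by case: r r_sorted {IHr r_neq0} => [|y r] //= /andP[/negbTE ->].
Qed.

Lemma equiv_str_reduce_pad s t : all (in_Sigma s) t ->
  exists z, equiv_str s t (reduce t ++ nseq z 0).
Proof.
elim: t => [|x t IHt] /=; first by move=> _; exists 0%N; apply: rt_refl.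
move=> /andP[x_Sigma /[dup] t_Sigma /IHt [z t_equiv]].
have := reduce_Sigma_star t_Sigma.
have := equiv_str_cons x t_equiv; rewrite /reduce_cons.
have [-> x0_equiv red_star|x_neq0] := eqVneq x 0.
  by exists z.+1; apply: rt_trans x0_equiv (equiv_str_zero_shift _ red_star).
case: (reduce t) => [|y r] x_equiv; first by exists z.
case: ifP x_equiv => [/andP[x_gt0 /eqP ->] x_equiv /= /andP[_ r_star]|_ x_equiv _].
  exists z.+2; apply: rt_trans x_equiv (equiv_str_cancel_shift _ _ r_star).
  by rewrite /in_pos x_gt0; case/andP: x_Sigma.
by exists z.
Qed.

Lemma sorted_no_cancelP s xs : all (in_Sigma_star s) xs ->
  reflect (forall i, (i.+1 < size xs)%N ->
             ~ (in_pos s (nth 0 xs i) /\ nth 0 xs i.+1 = - nth 0 xs i))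
          (sorted (fun x y => ~~ cancels x y) xs).
Proof.
move=> xs_star; apply: (iffP (sortedP 0)) => no_cancel i i_lt.
  move=> [/andP[x_gt0 _] y_eq]; move: (no_cancel i i_lt).
  by rewrite /cancels x_gt0 y_eq eqxx.
apply/negP => /andP[x_gt0 /eqP y_eq]; apply: (no_cancel i i_lt); split => //.
have /(allP xs_star) /andP[/andP[_ x_le] _] : nth 0 xs i \in xs.
  by apply: mem_nth; apply: ltn_trans i_lt.
by rewrite /in_pos x_gt0.
Qed.

Lemma normal_form_pad s n r : all (in_Sigma_star s) r -> reduced r ->
  (size r <= n)%N -> normal_form s n (r ++ nseq (n - size r) 0).
Proof.
move=> r_star /andP[_ r_sorted] r_le; exists (size r), r.
by do 4 split => //; apply/sorted_no_cancelP.
Qed.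

Lemma normal_form_reduce s n v : normal_form s n v ->
  v = reduce v ++ nseq (n - size (reduce v)) 0.
Proof.
move=> [k [xs [_ [<- [-> [xs_star no_cancel]]]]]].
have xs_reduced : reduced xs.
  rewrite /reduced (introT (sorted_no_cancelP xs_star) no_cancel) andbT.
  by apply/allP => x /(allP xs_star) /andP[].
by rewrite reduce_cat reduce_nseq0 -/(reduce xs) reduce_id.
Qed.

Theorem lemma5 (s n : nat) (hs : (1 <= s)%N) (hn : (1 <= n)%N) (t : seq int) :
  is_string s n t ->
  exists u : seq int,
    (normal_form s n u /\ equiv_str s t u) /\
    (forall v : seq int, normal_form s n v -> equiv_str s t v -> v = u).
Proof.
move=> [<- t_Sigma] {hs hn}.
have [z t_equiv] := equiv_str_reduce_pad t_Sigma.
have t_size : size t = (size (reduce t) + z)%N.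
  by rewrite (equiv_str_size t_equiv) size_cat size_nseq.
have zE : z = (size t - size (reduce t))%N by rewrite t_size addKn.
exists (reduce t ++ nseq z 0); split; first split.
- rewrite zE; apply: normal_form_pad; first exact: reduce_Sigma_star.
    exact: reduce_reduced.
  by rewrite t_size leq_addr.
- exact: t_equiv.
- move=> v v_normal t_v.
  by rewrite (normal_form_reduce v_normal) -(equiv_str_reduce t_v) zE.
Qed.
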